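(* For $0\le k<n$, the function $\frac{S_{k+1}}{S_k}$ belongs to $\mathcal{S}_n$, where $S_k(x_1,\dots,x_n)=\binom{n}{k}^{-1}\sum_{1\le i_1<\dots<i_k\le n}x_{i_1}\cdots x_{i_k}$ for $k=1,\dots,n$ and $S_0=1$.
   Context: $\Gamma_+=\{x\in\mathbb{R}^n: x_i>0\ \forall i\}$. $\mathcal{C}_n$ is the class of functions $f:\Gamma_+\to\mathbb{R}$ which are $C^\infty$, homogeneous of degree one, strictly monotone increasing ($\partial f/\partial x_i>0$ for each $i$), concave, and inverse-concave, meaning $f^*(x_1,\dots,x_n)=-f(x_1^{-1},\dots,x_n^{-1})$ is concave on $\Gamma_+$. $\mathcal{S}_n$ is the subclass of symmetric functions (invariant under permutations of the arguments) in $\mathcal{C}_n$. *)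

From HB Require Import structures.
From mathcomp Require Import all_boot all_order all_algebra all_fingroup.
From mathcomp Require Import all_classical all_reals all_analysis.
Set Implicit Arguments. Unset Strict Implicit. Unset Printing Implicit Defensive.
Import Order.TTheory GRing.Theory Num.Theory.
Import numFieldNormedType.Exports.
Local Open Scope classical_set_scope.
Local Open Scope ring_scope.

Section Defs.
Variables (R : realType) (n : nat).

Definition Gamma_plus : set 'rV[R]_n := [set x | forall i : 'I_n, 0 < x ord0 i].

Definition basis_vec (i : 'I_n) : 'rV[R]_n := delta_mx ord0 i.

Fixpoint iter_partial (ds : seq 'I_n) (f : 'rV[R]_n -> R) : 'rV[R]_n -> R :=
  match ds with
  | [::] => f
  | i :: ds' => fun x => derive (iter_partial ds' f) x (basis_vec i)
  end.

Definition smooth_on_Gamma (f : 'rV[R]_n -> R) : Prop :=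
  forall ds : seq 'I_n,
    {within Gamma_plus, continuous (iter_partial ds f)} /\
    (forall x, Gamma_plus x -> forall i, derivable (iter_partial ds f) x (basis_vec i)).

Definition homogeneous1 (f : 'rV[R]_n -> R) : Prop :=
  forall x, Gamma_plus x -> forall t : R, 0 < t -> f (t *: x) = t * f x.

Definition strictly_increasing (f : 'rV[R]_n -> R) : Prop :=
  forall x, Gamma_plus x -> forall i, 0 < derive f x (basis_vec i).

Definition concave_on_Gamma (f : 'rV[R]_n -> R) : Prop :=
  forall x y, Gamma_plus x -> Gamma_plus y -> forall t : R, 0 <= t -> t <= 1 ->
    (1 - t) * f x + t * f y <= f ((1 - t) *: x + t *: y).

Definition inverse_dual (f : 'rV[R]_n -> R) : 'rV[R]_n -> R :=
  fun x => - f (map_mx (fun a => a^-1) x).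

Definition inverse_concave (f : 'rV[R]_n -> R) : Prop :=
  concave_on_Gamma (inverse_dual f).

Definition class_C (f : 'rV[R]_n -> R) : Prop :=
  [/\ smooth_on_Gamma f, homogeneous1 f, strictly_increasing f,
      concave_on_Gamma f & inverse_concave f].

Definition symmetric_on_Gamma (f : 'rV[R]_n -> R) : Prop :=
  forall (s : 'S_n) x, Gamma_plus x -> f (col_perm s x) = f x.

Definition class_S (f : 'rV[R]_n -> R) : Prop :=
  class_C f /\ symmetric_on_Gamma f.

(* normalized elementary symmetric function S_k = binom(n,k)^{-1} sigma_k;
   for k = 0 this is 1 *)
Definition S_elem (k : nat) (x : 'rV[R]_n) : R :=
  ('C(n, k))%:R^-1 * \sum_(A : {set 'I_n} | #|A| == k) \prod_(i in A) x ord0 i.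

End Defs.

From mathcomp Require Import all_boot all_order all_algebra all_fingroup.
From mathcomp Require Import all_classical all_reals all_analysis.
From mathcomp Require Import lra ring zify.
Set Implicit Arguments. Unset Strict Implicit. Unset Printing Implicit Defensive.
Import Order.TTheory GRing.Theory Num.Theory.
Import numFieldNormedType.Exports.
Local Open Scope classical_set_scope.
Local Open Scope ring_scope.

(* Let sigma_j(A) be the j-th elementary symmetric polynomial in the x_i, i in A
   ([elsym]); on Gamma_+ the function f = S_(k+1)/S_k is a positive multiple of
   phi_k = sigma_(k+1)/sigma_k.  It is a rational function whose denominator does not
   vanish on Gamma_+, hence smooth.  Its i-th partial derivative has the sign of the
   Newton gap sigma_k^2 - sigma_(k+1) sigma_(k-1) of the variables other than x_i,
   which is positive by induction on the set of variables.  Concavity follows from the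
   homogeneity and superadditivity of phi_k (Marcus-Lopes), proved by induction on k
   from (k+2) phi_(k+1)(A) = sum_(i in A) x_i phi_k(A\i) / (x_i + phi_k(A\i)), since
   the parallel sum ab/(a+b) is monotone and superadditive.  Finally
   sigma_j(1/x) prod_i x_i = sigma_(n-j)(x) gives f(1/x) = c / phi_(n-k-1)(x), and
   -c/F is concave whenever F is positive and concave. *)

Section PositiveCone.
Variables (R : realType) (n : nat).
Implicit Types (x y : 'rV[R]_n) (F G : 'rV[R]_n -> R).

Lemma Gamma_plusD x y : Gamma_plus x -> Gamma_plus y -> Gamma_plus (x + y).
Proof. by move=> Gx Gy i; rewrite mxE addr_gt0. Qed.

Lemma Gamma_plusZ (t : R) x : 0 < t -> Gamma_plus x -> Gamma_plus (t *: x).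
Proof. by move=> t0 Gx i; rewrite mxE mulr_gt0. Qed.

Lemma Gamma_plus_convex x y (t : R) : 0 <= t -> t <= 1 ->
  Gamma_plus x -> Gamma_plus y -> Gamma_plus ((1 - t) *: x + t *: y).
Proof.
move=> t0 t1 Gx Gy i; rewrite !mxE.
have := Gx i; have := Gy i; nra.
Qed.

Lemma Gamma_plus_nbhs x : Gamma_plus x -> \forall y \near x, Gamma_plus y.
Proof.
move=> Gx.
have : \forall y \near x, forall i : 'I_n, 0 < (y : 'rV[R]_n) ord0 i.
  apply: (@filter_forall _ 'I_n (fun i (y : 'rV[R]_n) => 0 < y ord0 i) (nbhs x)) => i.
  exact: cvgr_gt (@coord_continuous R 1 n ord0 i x) _ (Gx i).
exact: filterS.
Qed.

Lemma concave_on_Gamma_eq F G : (forall x, Gamma_plus x -> F x = G x) ->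
  concave_on_Gamma F -> concave_on_Gamma G.
Proof.
move=> FG cF x y Gx Gy t t0 t1.
by rewrite -!FG //; [exact: cF | exact: Gamma_plus_convex].
Qed.

Lemma concave_of_superadditive F : homogeneous1 F ->
  (forall x y, Gamma_plus x -> Gamma_plus y -> F x + F y <= F (x + y)) ->
  concave_on_Gamma F.
Proof.
move=> homF supF x y Gx Gy t t0 t1.
have [->|t_neq0] := eqVneq t 0.
  by rewrite subr0 scale1r scale0r addr0 mul1r mul0r addr0.
have [->|t_neq1] := eqVneq t 1.
  by rewrite subrr scale0r add0r scale1r mul0r add0r mul1r.
have t_gt0 : 0 < t by rewrite lt_def t_neq0.
have t'_gt0 : 0 < 1 - t by rewrite subr_gt0 lt_def eq_sym t_neq1.
rewrite -(homF x Gx _ t'_gt0) -(homF y Gy _ t_gt0) supF //; exact: Gamma_plusZ.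
Qed.

(* [u |-> -c/u] is concave and nondecreasing on (0, +oo). *)
Lemma concave_opp_div (c : R) F : 0 <= c -> (forall x, Gamma_plus x -> 0 < F x) ->
  concave_on_Gamma F -> concave_on_Gamma (fun x => - (c / F x)).
Proof.
move=> c_ge0 F_gt0 cF x y Gx Gy t t0 t1.
have Gz := Gamma_plus_convex t0 t1 Gx Gy.
move: (cF x y Gx Gy t t0 t1) (F_gt0 x Gx) (F_gt0 y Gy) (F_gt0 _ Gz).
set p := F x; set q := F y; set r := F _ => le_wr p_gt0 q_gt0 r_gt0.
set w := (1 - t) * p + t * q.
have w_gt0 : 0 < w by rewrite /w; nra.
have le_rw : c / r <= c / w.
  by rewrite ler_wpM2l // lef_pV2 ?posrE.
suff : c / w <= (1 - t) * (c / p) + t * (c / q) by lra.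
rewrite -subr_ge0.
have -> : (1 - t) * (c / p) + t * (c / q) - c / w =
    c * t * (1 - t) * (p - q) ^+ 2 / (p * q * w).
  by rewrite /w; field; rewrite !gt_eqF.
apply: divr_ge0; first by rewrite mulr_ge0 ?sqr_ge0 // !mulr_ge0 // subr_ge0.
by rewrite !mulr_ge0 // ltW.
Qed.

End PositiveCone.

Section AffineDerive.
Variables (R : numFieldType) (V W : normedModType R).

Lemma is_derive_affine (f : V -> W) (x v : V) (c : W) :
  (forall h : R, f (h *: v + x) = f x + h *: c) -> is_derive x v f c.
Proof.
move=> f_affine.
have f_cvg : (fun h : R => h^-1 *: ((f \o shift x) (h *: v) - f x)) @ 0^' --> c.
  apply: (@cvg_trans _ (cst c @ (0 : R)^')); last exact: cvg_cst.
  apply: near_eq_cvg; near=> h.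
  have h_neq0 : h != 0 by near: h; exact: nbhs_dnbhs_neq.
  by rewrite /= f_affine addrC addKr scalerA mulVf ?scale1r.
by split; [exact: (cvgP c f_cvg) | exact: cvg_lim].
Unshelve. all: by end_near. Qed.

End AffineDerive.

Section QuotientDerive.
Variables (R : numFieldType) (V : normedModType R).
Implicit Types (f g : V -> R) (x v : V).

Lemma is_derive_inv f x v (df : R) : f x != 0 -> is_derive x v f df ->
  is_derive x v (fun y => (f y)^-1) (- (f x) ^- 2 * df).
Proof.
move=> fx_neq0 [f_der <-]; split; first exact: derivableV.
exact: deriveV.
Qed.

Lemma is_derive_div f g x v (df dg : R) : g x != 0 ->
  is_derive x v f df -> is_derive x v g dg ->
  is_derive x v (fun y => f y / g y) ((df * g x - f x * dg) / g x ^+ 2).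
Proof.
move=> gx_neq0 f_der g_der.
rewrite (_ : (fun y => f y / g y) = f * (fun y => (g y)^-1)) //.
apply: is_derive_eq (is_deriveM f_der (is_derive_inv gx_neq0 g_der)) _.
by rewrite /GRing.scale /=; field.
Qed.

End QuotientDerive.

Section RationalFunctions.
Variables (R : numFieldType) (n : nat).
Notation V := 'rV[R]_n.
Implicit Types (f g q : V -> R).

Inductive polyfun : (V -> R) -> Prop :=
| polyfun_cst (c : R) : polyfun (fun _ => c)
| polyfun_coord (j : 'I_n) : polyfun (fun y => y ord0 j)
| polyfunD f g : polyfun f -> polyfun g -> polyfun (fun y => f y + g y)
| polyfunM f g : polyfun f -> polyfun g -> polyfun (fun y => f y * g y).

Lemma polyfun_sum (I : Type) (r : seq I) (P : pred I) (F : I -> V -> R) :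
  (forall i, polyfun (F i)) -> polyfun (fun y => \sum_(i <- r | P i) F i y).
Proof.
move=> polyF; elim: r => [|a r IHr].
  by under eq_fun do rewrite big_nil; exact: polyfun_cst.
under eq_fun do rewrite big_cons.
by case: (P a); [exact: polyfunD | exact: IHr].
Qed.

Lemma polyfun_prod (I : Type) (r : seq I) (P : pred I) (F : I -> V -> R) :
  (forall i, polyfun (F i)) -> polyfun (fun y => \prod_(i <- r | P i) F i y).
Proof.
move=> polyF; elim: r => [|a r IHr].
  by under eq_fun do rewrite big_nil; exact: polyfun_cst.
under eq_fun do rewrite big_cons.
by case: (P a); [exact: polyfunM | exact: IHr].
Qed.

Lemma polyfun_is_derive f v : polyfun f ->
  exists2 f', polyfun f' & forall x, is_derive x v f (f' x).
Proof.
elim=> {f} [c|j|f g _ [f' pf' df] _ [g' pg' dg]|f g pf [f' pf' df] pg [g' pg' dg]].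
- exists (fun _ => 0); first exact: polyfun_cst.
  by move=> x; apply: is_derive_affine => h; rewrite scaler0 addr0.
- exists (fun _ => v ord0 j); first exact: polyfun_cst.
  by move=> x; apply: is_derive_affine => h; rewrite !mxE addrC.
- exists (fun y => f' y + g' y); first exact: polyfunD.
  by move=> x; exact: is_deriveD (df x) (dg x).
- exists (fun y => f y * g' y + g y * f' y); first by apply: polyfunD; exact: polyfunM.
  by move=> x; exact: is_deriveM (df x) (dg x).
Qed.

Lemma polyfun_continuous f : polyfun f -> continuous f.
Proof.
elim=> {f} [c|j|f g _ cf _ cg|f g _ cf _ cg] x.
- exact: cst_continuous.
- exact: coord_continuous.
- exact: cvgD (cf x) (cg x).
- exact: cvgM (cf x) (cg x).
Qed.

Inductive ratfun q : (V -> R) -> Prop :=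
| ratfun_poly f : polyfun f -> ratfun q f
| ratfun_inv : ratfun q (fun y => (q y)^-1)
| ratfunD f g : ratfun q f -> ratfun q g -> ratfun q (fun y => f y + g y)
| ratfunM f g : ratfun q f -> ratfun q g -> ratfun q (fun y => f y * g y).

Lemma ratfun_is_derive q f v : polyfun q -> ratfun q f ->
  exists2 f', ratfun q f' & forall x, q x != 0 -> is_derive x v f (f' x).
Proof.
move=> pq; elim=> {f} [f pf| |f g _ [f' rf' df] _ [g' rg' dg]
                      |f g rf [f' rf' df] rg [g' rg' dg]].
- have [f' pf' df] := polyfun_is_derive v pf.
  by exists f' => [|x _]; [exact: ratfun_poly | exact: df].
- have [q' pq' dq] := polyfun_is_derive v pq.
  exists (fun y => (- 1 * ((q y)^-1 * (q y)^-1)) * q' y).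
    apply: ratfunM; last exact: ratfun_poly.
    by apply: ratfunM; [exact/ratfun_poly/polyfun_cst | apply: ratfunM; exact: ratfun_inv].
  move=> x qx_neq0; apply: is_derive_eq (is_derive_inv qx_neq0 (dq x)) _.
  by rewrite mulN1r expr2 invfM.
- exists (fun y => f' y + g' y); first exact: ratfunD.
  by move=> x qx_neq0; exact: is_deriveD (df x qx_neq0) (dg x qx_neq0).
- exists (fun y => f y * g' y + g y * f' y); first by apply: ratfunD; exact: ratfunM.
  by move=> x qx_neq0; exact: is_deriveM (df x qx_neq0) (dg x qx_neq0).
Qed.

Lemma ratfun_continuous q f x : polyfun q -> ratfun q f -> q x != 0 ->
  {for x, continuous f}.
Proof.
move=> pq rf qx_neq0; elim: rf => {f} [f pf| |f g _ cf _ cg|f g _ cf _ cg].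
- exact: polyfun_continuous.
- have q_cont : q @ x --> q x by exact: polyfun_continuous.
  exact: cvgV qx_neq0 q_cont.
- exact: cvgD cf cg.
- exact: cvgM cf cg.
Qed.

End RationalFunctions.

Section SmoothRationalFunctions.
Variables (R : realType) (n : nat) (q : 'rV[R]_n -> R).
Hypotheses (q_poly : polyfun q) (q_neq0 : forall x, Gamma_plus x -> q x != 0).

Lemma ratfun_iter_partial f ds : ratfun q f ->
  exists2 F, ratfun q F & forall x, Gamma_plus x -> iter_partial ds f x = F x.
Proof.
move=> rf; elim: ds => [|i ds [F rF dsfF]]; first by exists f.
have [F' rF' dF] := ratfun_is_derive (basis_vec R i) q_poly rF.
exists F' => // x Gx /=.
have [_ <-] := dF x (q_neq0 Gx); apply: near_eq_derive.
by apply: filterS (Gamma_plus_nbhs Gx) => y Gy; exact: dsfF.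
Qed.

Lemma ratfun_smooth f : ratfun q f -> smooth_on_Gamma f.
Proof.
move=> rf ds; have [F rF dsfF] := ratfun_iter_partial ds rf; split.
  apply: (@subspace_eq_continuous _ _ _ F).
    by move=> y; rewrite inE => Gy; rewrite /from_subspace dsfF.
  apply: continuous_in_subspaceT => y; rewrite inE => Gy.
  exact: ratfun_continuous q_poly rF (q_neq0 Gy).
move=> x Gx i.
apply: (@near_eq_derivable _ _ _ F).
  by apply: filterS (Gamma_plus_nbhs Gx) => y Gy; rewrite dsfF.
have [F' _ dF] := ratfun_is_derive (basis_vec R i) q_poly rF.
by have [] := dF x (q_neq0 Gx).
Qed.

End SmoothRationalFunctions.

Lemma finset_ind (T : finType) (P : {set T} -> Prop) : P finset.set0 ->
  (forall (a : T) (A : {set T}), a \notin A -> P A -> P (a |: A)) -> forall A, P A.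
Proof.
move=> P0 PU1 A; move: {2}#|A| (erefl #|A|) => m; elim: m A => [|m IHm] A cardA.
  by rewrite (cards0_eq cardA).
have /card_gt0P [a aA] : (0 < #|A|)%N by rewrite cardA.
rewrite -(finset.setD1K aA); apply: PU1; first by rewrite setD11.
by apply: IHm; move: cardA; rewrite (cardsD1 a) aA add1n => -[].
Qed.

Section ElementarySymmetric.
Variables (R : comNzRingType) (n : nat).
Implicit Types (A B : {set 'I_n}) (x y : 'rV[R]_n).

Definition elsym j A x : R :=
  \sum_(B : {set 'I_n} | (B \subset A) && (#|B| == j)) \prod_(i in B) x ord0 i.

Lemma elsym0 A x : elsym 0 A x = 1.
Proof.
rewrite /elsym (big_pred1 finset.set0) ?big_set0 // => B /=.
by rewrite cards_eq0; case: eqP => [->|]; rewrite ?finset.sub0set ?andbF.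
Qed.

Lemma elsym_gt_card j A x : (#|A| < j)%N -> elsym j A x = 0.
Proof.
move=> ltAj; rewrite /elsym big_pred0 // => B.
apply/negbTE/andP => -[/subset_leq_card leBA /eqP cardB]; lia.
Qed.

Lemma eq_elsym j A x y : (forall i, i \in A -> x ord0 i = y ord0 i) ->
  elsym j A x = elsym j A y.
Proof.
move=> eq_xy; apply: eq_bigr => B /andP[/fintype.subsetP subBA _].
by apply: eq_bigr => i /subBA; exact: eq_xy.
Qed.

Lemma elsymZ j A (t : R) x : elsym j A (t *: x) = t ^+ j * elsym j A x.
Proof.
rewrite /elsym mulr_sumr; apply: eq_bigr => B /andP[_ /eqP <-].
by rewrite -prodr_const -big_split; apply: eq_bigr => i _; rewrite mxE.
Qed.

Lemma elsym_col_perm j (s : 'S_n) x :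
  elsym j [set: 'I_n] (col_perm s x) = elsym j [set: 'I_n] x.
Proof.
rewrite /elsym [RHS](reindex_inj (imset_inj (@perm_inj _ s))) /=.
apply: eq_big => B; first by rewrite !finset.subsetT card_imset //; exact: perm_inj.
move=> _; rewrite big_imset /=; last by move=> ? ? _ _; exact: perm_inj.
by apply: eq_bigr => i _; rewrite mxE.
Qed.

Lemma elsym_setU1 j a A x : a \notin A ->
  elsym j.+1 (a |: A) x = elsym j.+1 A x + x ord0 a * elsym j A x.
Proof.
move=> aA.
have sub_aA B : ((B \subset a |: A) && (a \notin B)) = (B \subset A).
  apply/andP/idP => [[/fintype.subsetP sB aB]|sBA].
    apply/fintype.subsetP => y yB; move: (sB y yB); rewrite in_setU1.
    by case/orP => [/eqP ya|//]; rewrite -ya yB in aB.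
  split; first exact: fintype.subset_trans sBA (finset.subsetUr _ _).
  by apply: contra aA => aB; exact: (fintype.subsetP sBA).
rewrite /elsym (bigID (fun B => a \in B)) /= addrC; congr (_ + _).
  by apply: eq_bigl => B; rewrite -andbA andbCA -sub_aA andbC -!andbA andbCA.
rewrite big_distrr /= (reindex_onto (fun C => a |: C) (fun B => B :\ a)) /=; last first.
  by move=> B /andP[_ aB]; exact: finset.setD1K.
apply: eq_big => C.
  have [aC|aC] := boolP (a \in C).
    rewrite (_ : _ :\ a == C = false) ?andbF; last first.
      by apply/negbTE/eqP => eC; move: aC; rewrite -eC setD11.
    by apply/esym/negbTE/andP => -[/fintype.subsetP/(_ a aC)]; rewrite (negPf aA).
  rewrite setU1K // eqxx setU11 cardsU1 aC add1n eqSS !andbT.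
  congr (_ && _); apply/idP/idP => [sCA|]; last exact: finset.setUS.
  by rewrite -sub_aA aC andbT (fintype.subset_trans (finset.subsetUr _ _) sCA).
by move=> /andP[_ /eqP <-]; rewrite big_setU1 //= setD11.
Qed.

Lemma elsym_setD1 j i A x : i \in A ->
  elsym j.+1 A x = elsym j.+1 (A :\ i) x + x ord0 i * elsym j (A :\ i) x.
Proof. by move=> iA; rewrite -elsym_setU1 ?setD11 // finset.setD1K. Qed.

Lemma elsym1 A x : elsym 1 A x = \sum_(i in A) x ord0 i.
Proof.
elim/finset_ind: A => [|a A aA IHA]; first by rewrite elsym_gt_card ?cards0 ?big_set0.
by rewrite elsym_setU1 // big_setU1 //= IHA elsym0 mulr1 addrC.
Qed.

Lemma sum_elsym_setD1 j A x :
  \sum_(i in A) x ord0 i * elsym j (A :\ i) x = j.+1%:R * elsym j.+1 A x.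
Proof.
elim/finset_ind: A j => [|a A aA IHA] j.
  by rewrite big_set0 elsym_gt_card ?cards0 // mulr0.
case: j => [|j].
  by under eq_bigr do rewrite elsym0 mulr1; rewrite elsym1 mul1r.
have setU1D1 i : i \in A -> (a |: A) :\ i = a |: (A :\ i).
  move=> iA; apply/finset.setP => y; rewrite !inE.
  have [->|//] := eqVneq y a; rewrite andbT /=.
  by apply: contraNneq aA => ->.
rewrite big_setU1 //= setU1K //.
rewrite (eq_bigr (fun i => x ord0 i * elsym j.+1 (A :\ i) x +
                           x ord0 a * (x ord0 i * elsym j (A :\ i) x))); last first.
  move=> i iA; rewrite setU1D1 // elsym_setU1; first ring.
  by rewrite !inE negb_and aA orbT.
by rewrite big_split /= -mulr_sumr !IHA !elsym_setU1 // !mulrS; ring.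
Qed.

End ElementarySymmetric.

Lemma elsym_map_inv (R : fieldType) (n j : nat) (x : 'rV[R]_n) : (j <= n)%N ->
  (forall i, x ord0 i != 0) ->
  elsym j [set: 'I_n] (map_mx GRing.inv x) * \prod_(i < n) x ord0 i =
  elsym (n - j)%N [set: 'I_n] x.
Proof.
move=> le_jn x_neq0; rewrite /elsym mulr_suml.
rewrite [RHS](reindex_inj (@finset.setC_inj _)) /=.
apply: eq_big => B.
  rewrite !finset.subsetT /=; have := cardsC B; rewrite card_ord.
  by move: #|B| #|~: B| => b b' ?; apply/eqP/eqP; lia.
move=> _; rewrite [X in _ * X](bigID (mem B)) /= mulrA -big_split /=.
rewrite big1 ?mul1r => [|i _]; last by rewrite mxE mulVf.
by apply: eq_bigl => i; rewrite inE.
Qed.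

Section NewtonInequality.
Variables (R : realType) (n : nat) (x : 'rV[R]_n).
Hypothesis Gx : Gamma_plus x.
Implicit Types (A : {set 'I_n}).

Lemma elsym_ge0 j A : 0 <= elsym j A x.
Proof. by apply: sumr_ge0 => B _; apply: prodr_ge0 => i _; exact: ltW. Qed.

Lemma elsym_gt0 j A : (j <= #|A|)%N -> 0 < elsym j A x.
Proof.
elim/finset_ind: A j => [|a A aA IHA] [|j]; rewrite ?elsym0 ?cards0 //.
rewrite cardsU1 aA add1n ltnS => le_jA; rewrite elsym_setU1 //.
by rewrite ltr_wpDl ?elsym_ge0 // mulr_gt0 ?IHA.
Qed.

Definition newton_gap j A := elsym j.+1 A x ^+ 2 - elsym j.+2 A x * elsym j A x.

Lemma newton_gap0_setU1 a A : a \notin A ->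
  newton_gap 0 (a |: A) = newton_gap 0 A + x ord0 a * elsym 1 A x + x ord0 a ^+ 2.
Proof. by move=> aA; rewrite /newton_gap !elsym_setU1 // !elsym0; ring. Qed.

Lemma newton_gapS_setU1 j a A : a \notin A ->
  newton_gap j.+1 (a |: A) = newton_gap j.+1 A +
    x ord0 a * (elsym j.+2 A x * elsym j.+1 A x - elsym j.+3 A x * elsym j A x) +
    x ord0 a ^+ 2 * newton_gap j A.
Proof. by move=> aA; rewrite /newton_gap !elsym_setU1 //; ring. Qed.

(* With [s_m = elsym m A x]: multiply [s3 s1 <= s2^2] by [s2 s0 <= s1^2], cancel [s1 s2]. *)
Lemma newton_gap_mixed j A : 0 <= newton_gap j A -> 0 <= newton_gap j.+1 A ->
  elsym j.+3 A x * elsym j A x <= elsym j.+2 A x * elsym j.+1 A x.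
Proof.
rewrite /newton_gap !subr_ge0 => le0 le1.
have [lt_A|le_A] := ltnP #|A| j.+2.
  by rewrite [elsym j.+3 _ _]elsym_gt_card ?mul0r ?mulr_ge0 ?elsym_ge0 // ltnW.
have s1_gt0 : 0 < elsym j.+1 A x by rewrite elsym_gt0 // ltnW.
have s2_gt0 : 0 < elsym j.+2 A x by rewrite elsym_gt0.
rewrite -(@ler_pM2l _ (elsym j.+1 A x * elsym j.+2 A x)) ?mulr_gt0 //.
have := ler_pM (mulr_ge0 (elsym_ge0 _ _) (elsym_ge0 _ _))
               (mulr_ge0 (elsym_ge0 _ _) (elsym_ge0 _ _)) le1 le0.
by congr (_ <= _); ring.
Qed.

Lemma newton_gap_ge0 j A : 0 <= newton_gap j A.
Proof.
elim/finset_ind: A j => [|a A aA IHA] j.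
  have elsym_set0 k : elsym k.+1 finset.set0 x = 0 by rewrite elsym_gt_card ?cards0.
  by rewrite /newton_gap !elsym_set0 mul0r subr0 sqr_ge0.
have xa_gt0 := Gx a; case: j => [|j].
  rewrite newton_gap0_setU1 //; apply: addr_ge0; last exact: sqr_ge0.
  by apply: addr_ge0; [exact: IHA | rewrite mulr_ge0 ?elsym_ge0 ?ltW].
rewrite newton_gapS_setU1 //; apply: addr_ge0; last by rewrite mulr_ge0 ?sqr_ge0.
apply: addr_ge0; first exact: IHA.
by apply: mulr_ge0; [exact: ltW | rewrite subr_ge0 newton_gap_mixed].
Qed.

Lemma newton_gap_gt0 j A : (j < #|A|)%N -> 0 < newton_gap j A.
Proof.
elim/finset_ind: A j => [|a A aA IHA] j; first by rewrite cards0.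
rewrite cardsU1 aA add1n ltnS; have xa_gt0 := Gx a; case: j => [|j] le_jA.
  rewrite newton_gap0_setU1 //; apply: ltr_wpDl; last exact: exprn_gt0.
  by apply: addr_ge0; [exact: newton_gap_ge0 | rewrite mulr_ge0 ?elsym_ge0 ?ltW].
rewrite newton_gapS_setU1 //; apply: ltr_wpDl; last by rewrite mulr_gt0 ?exprn_gt0 ?IHA.
apply: addr_ge0; first exact: newton_gap_ge0.
by apply: mulr_ge0; [exact: ltW | rewrite subr_ge0 newton_gap_mixed ?newton_gap_ge0].
Qed.

End NewtonInequality.

Section ParallelSum.
Variable R : realFieldType.

Definition parallel_sum (a b : R) := a * b / (a + b).

Lemma parallel_sum_ler2l (a b b' : R) : 0 < a -> 0 <= b -> b <= b' ->
  parallel_sum a b <= parallel_sum a b'.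
Proof.
move=> a_gt0 b_ge0 le_bb'; rewrite /parallel_sum -subr_ge0.
have -> : a * b' / (a + b') - a * b / (a + b) = a ^+ 2 * (b' - b) / ((a + b) * (a + b')).
  by field; rewrite !gt_eqF //; lra.
by rewrite divr_ge0 ?mulr_ge0 ?sqr_ge0 ?subr_ge0 //; lra.
Qed.

Lemma parallel_sum_superadditive (a1 a2 b1 b2 : R) : 0 < a1 -> 0 < a2 ->
  0 <= b1 -> 0 <= b2 ->
  parallel_sum a1 b1 + parallel_sum a2 b2 <= parallel_sum (a1 + a2) (b1 + b2).
Proof.
move=> a1_gt0 a2_gt0 b1_ge0 b2_ge0; rewrite /parallel_sum -subr_ge0.
have -> : (a1 + a2) * (b1 + b2) / (a1 + a2 + (b1 + b2)) -
    (a1 * b1 / (a1 + b1) + a2 * b2 / (a2 + b2)) =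
    (a1 * b2 - a2 * b1) ^+ 2 / ((a1 + b1) * (a2 + b2) * (a1 + a2 + (b1 + b2))).
  by field; rewrite !gt_eqF //; lra.
by rewrite divr_ge0 ?sqr_ge0 // !mulr_ge0 //; lra.
Qed.

End ParallelSum.

Section SymmetricRatio.
Variables (R : realType) (n : nat).
Implicit Types (A : {set 'I_n}) (x y : 'rV[R]_n).

Definition elsym_ratio j A x := elsym j.+1 A x / elsym j A x.

Lemma elsym_ratio_gt0 j A x : Gamma_plus x -> (j < #|A|)%N -> 0 < elsym_ratio j A x.
Proof. by move=> Gx lt_jA; rewrite divr_gt0 ?elsym_gt0 // ltnW. Qed.

Lemma elsym_ratioZ j A (t : R) x : Gamma_plus x -> (j <= #|A|)%N -> 0 < t ->
  elsym_ratio j A (t *: x) = t * elsym_ratio j A x.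
Proof.
move=> Gx le_jA t_gt0; have := elsym_gt0 Gx le_jA.
by rewrite /elsym_ratio !elsymZ exprS => ?; field; rewrite !gt_eqF ?exprn_gt0.
Qed.

Lemma elsym_ratio_rec j A x : Gamma_plus x -> (j.+2 <= #|A|)%N ->
  j.+2%:R * elsym_ratio j.+1 A x =
  \sum_(i in A) parallel_sum (x ord0 i) (elsym_ratio j (A :\ i) x).
Proof.
move=> Gx le_jA.
rewrite /elsym_ratio mulrA -sum_elsym_setD1 mulr_suml; apply: eq_bigr => i iA.
have cardA : #|A| = #|A :\ i|.+1 by rewrite (cardsD1 i) iA.
have s0_gt0 : 0 < elsym j (A :\ i) x by apply: elsym_gt0 => //; lia.
have s1_ge0 : 0 <= elsym j.+1 (A :\ i) x by exact: elsym_ge0.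
have xi_gt0 := Gx i.
have num_gt0 : 0 < elsym j.+1 (A :\ i) x + x ord0 i * elsym j (A :\ i) x.
  by rewrite ltr_wpDl // mulr_gt0.
rewrite (elsym_setD1 _ _ iA) /parallel_sum.
by field; rewrite !gt_eqF // addrC.
Qed.

Lemma elsym_ratio_superadditive j A x y : Gamma_plus x -> Gamma_plus y ->
  (j < #|A|)%N -> elsym_ratio j A x + elsym_ratio j A y <= elsym_ratio j A (x + y).
Proof.
elim: j A => [|j IHj] A Gx Gy lt_jA.
  rewrite /elsym_ratio !elsym0 !divr1 !elsym1 -big_split /=.
  by apply: ler_sum => i _; rewrite mxE.
have Gxy := Gamma_plusD Gx Gy.
rewrite -(@ler_pM2l _ j.+2%:R) ?ltr0n // mulrDr !elsym_ratio_rec //.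
rewrite -big_split /=; apply: ler_sum => i iA.
have lt_jAi : (j < #|A :\ i|)%N by move: lt_jA; rewrite (cardsD1 i) iA.
apply: le_trans (parallel_sum_superadditive (Gx i) (Gy i) _ _) _;
  try exact/ltW/elsym_ratio_gt0.
rewrite mxE; apply: parallel_sum_ler2l; first exact: addr_gt0.
  by rewrite addr_ge0 // ltW // elsym_ratio_gt0.
exact: IHj.
Qed.

Lemma elsym_ratio_concave j A : (j < #|A|)%N -> concave_on_Gamma (elsym_ratio j A).
Proof.
move=> lt_jA; apply: concave_of_superadditive => [x Gx t t_gt0|x y Gx Gy].
  by rewrite elsym_ratioZ // ltnW.
exact: elsym_ratio_superadditive.
Qed.

End SymmetricRatio.

Section NormalizedElementarySymmetric.
Variables (R : realType) (n : nat).
Notation T := [set: 'I_n]%SET.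
Implicit Types (x : 'rV[R]_n).

Lemma S_elemE j x : S_elem j x = ('C(n, j))%:R^-1 * elsym j T x.
Proof. by congr (_ * _); apply: eq_bigl => B; rewrite finset.subsetT. Qed.

Lemma S_elem0 x : S_elem 0 x = 1.
Proof. by rewrite S_elemE elsym0 bin0 invr1 mulr1. Qed.

Lemma S_elem_gt0 j x : (j <= n)%N -> Gamma_plus x -> 0 < S_elem j x.
Proof.
move=> le_jn Gx; rewrite S_elemE mulr_gt0 ?invr_gt0 ?ltr0n ?bin_gt0 //.
by rewrite elsym_gt0 // finset.cardsT card_ord.
Qed.

Lemma S_elem_polyfun j : polyfun (@S_elem R n j).
Proof.
rewrite /S_elem; apply: polyfunM; first exact: polyfun_cst.
by apply: polyfun_sum => A; apply: polyfun_prod => i; exact: polyfun_coord.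
Qed.

Lemma S_elem_setD1 j i x : S_elem j.+1 x =
  ('C(n, j.+1))%:R^-1 * (elsym j.+1 (T :\ i) x + x ord0 i * elsym j (T :\ i) x).
Proof. by rewrite S_elemE (elsym_setD1 _ _ (finset.in_setT i)). Qed.

Lemma S_elem_is_derive j i x : is_derive x (basis_vec R i) (@S_elem R n j.+1)
  (('C(n, j.+1))%:R^-1 * elsym j (T :\ i) x).
Proof.
have x_off_i h : {in T :\ i, forall l, (h *: basis_vec R i + x) ord0 l = x ord0 l}.
  by move=> l; rewrite !inE andbT !mxE => /negPf ->; rewrite andbF mulr0 add0r.
apply: is_derive_affine => h; rewrite !(S_elem_setD1 _ i).
rewrite !(eq_elsym _ (x_off_i h)) !mxE !eqxx mulr1 /GRing.scale /=; ring.
Qed.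

Lemma S_elem_col_perm j (s : 'S_n) x : S_elem j (col_perm s x) = S_elem j x.
Proof. by rewrite !S_elemE elsym_col_perm. Qed.

Lemma S_elem_map_inv j x : (j <= n)%N -> Gamma_plus x ->
  S_elem j (map_mx GRing.inv x) =
  ('C(n, j))%:R^-1 * elsym (n - j)%N T x / \prod_(i < n) x ord0 i.
Proof.
move=> le_jn Gx; have x_neq0 i : x ord0 i != 0 by rewrite gt_eqF.
rewrite S_elemE -(elsym_map_inv le_jn x_neq0) -mulrA mulfK //.
by apply/prodf_neq0 => i _.
Qed.

Definition S_ratio k x := S_elem k.+1 x / S_elem k x.

End NormalizedElementarySymmetric.

Section RatioOfNormalizedSymmetric.
Variables (R : realType) (n k : nat).
Hypothesis lt_kn : (k < n)%N.
Notation T := [set: 'I_n]%SET.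
Notation f := (@S_ratio R n k).

Let c : R := ('C(n, k.+1))%:R^-1 / ('C(n, k))%:R^-1.

Let c_gt0 : 0 < c.
Proof. by rewrite divr_gt0 // invr_gt0 ltr0n bin_gt0 // ltnW. Qed.

Let cardT : #|T| = n.
Proof. by rewrite finset.cardsT card_ord. Qed.

Lemma S_ratioE x : Gamma_plus x -> f x = c * elsym_ratio k T x.
Proof.
move=> Gx; have : 0 < elsym k T x by rewrite elsym_gt0 // cardT ltnW.
rewrite /S_ratio /elsym_ratio !S_elemE /c => ?.
by field; rewrite !gt_eqF ?invr_gt0 ?ltr0n ?bin_gt0 // ltnW.
Qed.

Lemma S_ratio_map_inv x : Gamma_plus x ->
  f (map_mx GRing.inv x) = c / elsym_ratio (n - k.+1) T x.
Proof.
move=> Gx; have n_k : (n - k = (n - k.+1).+1)%N by lia.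
rewrite /S_ratio /elsym_ratio !S_elem_map_inv // 1?ltnW // n_k.
have : 0 < \prod_(i < n) x ord0 i by apply: prodr_gt0 => i _; exact: Gx.
have : 0 < elsym (n - k.+1)%N T x by rewrite elsym_gt0 // cardT leq_subr.
have : 0 < elsym (n - k.+1).+1%N T x by rewrite elsym_gt0 // cardT -n_k leq_subr.
by move=> *; rewrite /c; field; rewrite !gt_eqF ?invr_gt0 ?ltr0n ?bin_gt0 // ltnW.
Qed.

Lemma S_ratio_smooth : smooth_on_Gamma f.
Proof.
apply: (@ratfun_smooth _ _ (S_elem k)) => [|x Gx|].
- exact: S_elem_polyfun.
- by rewrite gt_eqF // S_elem_gt0 // ltnW.
- by apply: ratfunM; [exact/ratfun_poly/S_elem_polyfun | exact: ratfun_inv].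
Qed.

Lemma S_ratio_homogeneous : homogeneous1 f.
Proof.
move=> x Gx t t_gt0; have Gtx := Gamma_plusZ t_gt0 Gx.
by rewrite !S_ratioE // elsym_ratioZ ?cardT 1?ltnW // mulrCA.
Qed.

Lemma S_ratio_concave : concave_on_Gamma f.
Proof.
apply: concave_of_superadditive S_ratio_homogeneous _ => x y Gx Gy.
have Gxy := Gamma_plusD Gx Gy.
rewrite !S_ratioE // -mulrDr ler_pM2l //.
by apply: elsym_ratio_superadditive; rewrite ?cardT.
Qed.

Lemma S_ratio_inverse_concave : inverse_concave f.
Proof.
have lt_mT : (n - k.+1 < #|T|)%N by rewrite cardT; lia.
apply: (@concave_on_Gamma_eq _ _ (fun x => - (c / elsym_ratio (n - k.+1) T x))).
  by move=> x Gx; rewrite /inverse_dual S_ratio_map_inv.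
apply: concave_opp_div; first exact: ltW.
  by move=> x Gx; exact: elsym_ratio_gt0.
exact: elsym_ratio_concave.
Qed.

Lemma S_ratio_symmetric : symmetric_on_Gamma f.
Proof. by move=> s x _; rewrite /S_ratio !S_elem_col_perm. Qed.

Lemma S_ratio_increasing : strictly_increasing f.
Proof.
move=> x Gx i; have Sk_neq0 : S_elem k x != 0 by rewrite gt_eqF // S_elem_gt0 // ltnW.
have dnum := S_elem_is_derive k i x.
case: k lt_kn Sk_neq0 dnum => [|k'] lt_kn' Sk_neq0 dnum.
  have dden : is_derive x (basis_vec R i) (@S_elem R n 0) 0.
    by rewrite (funext (@S_elem0 R n)); exact: is_derive_cst.
  have [_ ->] := is_derive_div Sk_neq0 dnum dden.
  by rewrite S_elem0 mulr0 subr0 expr1n divr1 mulr1 elsym0 mulr1 invr_gt0 ltr0n bin_gt0.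
have [_ ->] := is_derive_div Sk_neq0 dnum (S_elem_is_derive k' i x).
rewrite divr_gt0 ?exprn_gt0 ?S_elem_gt0 // 1?ltnW // !(S_elem_setD1 _ i).
rewrite (_ : _ - _ = ('C(n, k'.+2))%:R^-1 * ('C(n, k'.+1))%:R^-1 *
                     newton_gap x k' (T :\ i)); last by rewrite /newton_gap; ring.
rewrite !mulr_gt0 ?invr_gt0 ?ltr0n ?bin_gt0 // 1?ltnW // newton_gap_gt0 //.
by move: lt_kn'; rewrite -{1}cardT (cardsD1 i) finset.in_setT.
Qed.

End RatioOfNormalizedSymmetric.

Theorem theorem2p6 (R : realType) (n k : nat) : (k < n)%N ->
  class_S (fun x : 'rV[R]_n => S_elem k.+1 x / S_elem k x).
Proof.
move=> lt_kn; split; last exact: S_ratio_symmetric.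
split; [ exact: S_ratio_smooth | exact: S_ratio_homogeneous
       | exact: S_ratio_increasing | exact: S_ratio_concave
       | exact: S_ratio_inverse_concave ].
Qed.
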